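(* Let $a_1,\dots,a_n$ be positive integers and $K=R(a_1,\dots,a_n)$ a 2-bridge link. If $K$ is not $R(1,1,1,1)$, $R(1,a_2,1)$ (for any $a_2\ge1$), $R(1,1)$ or $R(1)$, then $$\det(R(a_1,\dots,a_n))\ge V(a_1,\dots,a_n).$$
   Context: For positive integers $b_1,\dots,b_r$, $R(b_1,\dots,b_r)$ denotes the 2-bridge link given by the standard alternating 2-bridge diagram with $r$ twist regions in a row, the $i$-th containing $b_i$ half-twists; $\det$ denotes $|\Delta(-1)|$ for the Alexander polynomial $\Delta$ (equivalently $\det R(b_1,\dots,b_r)=S(r)$ with $S(0)=1$, $S(1)=b_1$, $S(i+1)=b_{i+1}S(i)+S(i-1)$). $V(a_1,\dots,a_n)=\prod_{i=1}^n\frac{a_i+2}{2}$. *)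

From mathcomp Require Import all_boot all_order all_algebra.
Set Implicit Arguments. Unset Strict Implicit. Unset Printing Implicit Defensive.
Import Order.TTheory GRing.Theory Num.Theory.

(* Continuant recursion: given S(i-1) = prev, S(i) = cur, consume b_{i+1}, ... *)
Fixpoint continuant_aux (s : seq nat) (prev cur : nat) : nat :=
  match s with
  | [::] => cur
  | b :: t => continuant_aux t cur (b * cur + prev)
  end.

(* det R(b_1,...,b_r) = S(r), with S(0)=1, S(1)=b_1 (i.e. S(-1)=0),
   S(i+1) = b_{i+1} S(i) + S(i-1). *)
Definition det_R (s : seq nat) : nat := continuant_aux s 0 1.

Definition V (s : seq nat) : rat :=
  (\prod_(a <- s) ((a%:R + 2) / 2))%R.

(** Reading a from left to right, the continuant recursion carries the pair
    (S(i-1), S(i)).  Call this pair dominating for a rational v when v <= S(i)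
    and 3v/2 <= S(i) + S(i-1).  Consuming a further entry b >= 1 multiplies v by
    (b+2)/2 and preserves domination, so once the partial product V of some
    prefix is dominated, V a <= det a follows.  Such a prefix is [x] with x >= 2,
    [1; k; m] with m >= 2, [1; k; 1; p] with k or p >= 2, or [1; 1; 1; 1; q];
    the only sequences with none of these prefixes are the exceptions of the
    theorem and [1; k] with k >= 2, which is checked directly. *)

From mathcomp Require Import all_boot all_order all_algebra.
From mathcomp Require Import lra zify.
Import Order.TTheory GRing.Theory Num.Theory.

Local Open Scope ring_scope.

Definition dominates (p c : nat) (v : rat) : bool :=
  (v <= c%:R) && (3 / 2 * v <= c%:R + p%:R).

Lemma V_cons x t : V (x :: t) = (x%:R + 2) / 2 * V t.
Proof. by rewrite /V big_cons. Qed.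

Lemma dominates_step b p c v : (0 < b)%N ->
  dominates p c v -> dominates c (b * c + p) (v * ((b%:R + 2) / 2)).
Proof.
move=> b_gt0 /andP[v_le_c v_le_cp]; rewrite /dominates natrD natrM.
have b_ge1 : (1 : rat) <= b%:R by rewrite ler1n.
have c_ge0 : (0 : rat) <= c%:R by [].
have p_ge0 : (0 : rat) <= p%:R by [].
apply/andP; split; nra.
Qed.

Lemma V_le_continuant t p c v : all (fun x => 0 < x)%N t ->
  dominates p c v -> v * V t <= (continuant_aux t p c)%:R.
Proof.
elim: t p c v => [|b t IH] p c v /=.
  by move=> _ /andP[v_le_c _]; rewrite /V big_nil mulr1.
case/andP=> b_gt0 t_gt0 dom; rewrite V_cons mulrA.
exact/IH/dominates_step.
Qed.

Lemma V_le_det_R_head_ge2 x t : (2 <= x)%N -> all (fun x => 0 < x)%N t ->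
  V (x :: t) <= (det_R (x :: t))%:R.
Proof.
move=> x_ge2 t_gt0; rewrite V_cons; apply: V_le_continuant => //.
have x_ge2' : (2 : rat) <= x%:R by rewrite (ler_nat _ 2).
by rewrite /dominates muln1 addn0; apply/andP; split; lra.
Qed.

Lemma V_le_det_R_1_ge2 k : (2 <= k)%N -> V [:: 1; k]%N <= (det_R [:: 1; k]%N)%:R.
Proof.
move=> k_ge2; have k_ge2' : (2 : rat) <= k%:R by rewrite (ler_nat _ 2).
by rewrite /det_R /= !V_cons /V big_nil muln1 natrD; lra.
Qed.

Lemma V_le_det_R_1_pos_ge2 k m t : (0 < k)%N -> (2 <= m)%N ->
  all (fun x => 0 < x)%N t -> V [:: 1, k, m & t]%N <= (det_R [:: 1, k, m & t]%N)%:R.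
Proof.
move=> k_gt0 m_ge2 t_gt0; rewrite !V_cons !mulrA; apply: V_le_continuant => //.
have k_ge1 : (1 : rat) <= k%:R by rewrite ler1n.
have m_ge2' : (2 : rat) <= m%:R by rewrite (ler_nat _ 2).
by rewrite /dominates !muln1 !addn0 !(natrD, natrM); apply/andP; split; nra.
Qed.

Lemma V_le_det_R_1_pos_1_pos k p t : (0 < k)%N -> (0 < p)%N -> (2 <= k)%N || (2 <= p)%N ->
  all (fun x => 0 < x)%N t -> V [:: 1, k, 1, p & t]%N <= (det_R [:: 1, k, 1, p & t]%N)%:R.
Proof.
move=> k_gt0 p_gt0 kp_ge2 t_gt0; rewrite !V_cons !mulrA; apply: V_le_continuant => //.
have k_ge1 : (1 : rat) <= k%:R by rewrite ler1n.
have p_ge1 : (1 : rat) <= p%:R by rewrite ler1n.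
have kp_ge3 : (3 : rat) <= k%:R + p%:R.
  by rewrite -natrD (ler_nat _ 3); case/orP: kp_ge2; lia.
have kp_mul : 0 <= (k%:R - 1) * (p%:R - 1) :> rat by apply: mulr_ge0; rewrite subr_ge0.
by rewrite /dominates !(muln1, mul1n, addn0) !(natrD, natrM); apply/andP; split; nra.
Qed.

Lemma V_le_det_R_1111 q t : (0 < q)%N -> all (fun x => 0 < x)%N t ->
  V [:: 1, 1, 1, 1, q & t]%N <= (det_R [:: 1, 1, 1, 1, q & t]%N)%:R.
Proof.
move=> q_gt0 t_gt0; rewrite !V_cons !mulrA.
apply: (V_le_continuant _ 5 (q * 5 + 3)) => //.
have q_ge1 : (1 : rat) <= q%:R by rewrite ler1n.
by rewrite /dominates !(natrD, natrM); apply/andP; split; lra.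
Qed.

Theorem corollary3p6 (a : seq nat) :
  (0 < size a)%N ->
  all (fun x => 0 < x)%N a ->
  a <> [:: 1; 1; 1; 1]%N ->
  (forall a2 : nat, a <> [:: 1; a2; 1]%N) ->
  a <> [:: 1; 1]%N ->
  a <> [:: 1]%N ->
  (V a <= (det_R a)%:R)%R.
Proof.
case: a => [|x t] // _ /andP[x_gt0 t_gt0] not1111 not1k1 not11 not1.
have [x_ge2|x_le1] := leqP 2 x; first exact: V_le_det_R_head_ge2.
have x1 : x = 1%N by lia.
subst x; case: t => [|k t] in t_gt0 not1111 not1k1 not11 not1 *.
  by case: (not1 erefl).
clear not1; case/andP: t_gt0 => k_gt0 t_gt0.
case: t => [|m t] in t_gt0 not1111 not1k1 not11 *.
  have k_ne1 : k <> 1%N by move=> k1; apply: not11; rewrite k1.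
  by apply: V_le_det_R_1_ge2; lia.
clear not11; case/andP: t_gt0 => m_gt0 t_gt0.
have [m_ge2|m_le1] := leqP 2 m; first exact: V_le_det_R_1_pos_ge2.
have m1 : m = 1%N by lia.
subst m; case: t => [|p t] in t_gt0 not1111 not1k1 *.
  by case: (not1k1 k erefl).
clear not1k1; case/andP: t_gt0 => p_gt0 t_gt0.
have [kp_ge2|] := boolP ((2 <= k) || (2 <= p))%N.
  exact: V_le_det_R_1_pos_1_pos.
rewrite negb_or -!ltnNge => /andP[k_le1 p_le1].
have k1 : k = 1%N by lia.
have p1 : p = 1%N by lia.
subst k p; case: t => [|q t] in t_gt0 not1111 *.
  by case: (not1111 erefl).
by case/andP: t_gt0 => q_gt0 t_gt0; apply: V_le_det_R_1111.
Qed.
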